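(* Let $F:\mathbb{R}\to[0,1]$ be an arbitrary distribution function, let $\alpha\in(0,1)$, and put $\xi=F^{\wedge}(\alpha)$ and $\beta=\Delta F(\xi)$. Let $X,V$ be real random variables on a probability space $(\Omega,\mathcal{F},\mathbb{P})$ such that $V\sim U(0,1)$ and $V$ is independent of $X$. Define $F_V(X)(\omega)=F_{V(\omega)}(X(\omega))$ on $\{V\in(0,1]\}$. Then \[\mathbb{P}\big(F_V(X)\le\alpha\big)-\alpha=\mathbb{P}\big(X>\xi\text{ and }F(X)=\alpha\big)+c_\beta\big(\mathbb{P}(X=\xi)-\beta\big)+\big(\mathbb{P}(X\le\xi)-F(\xi)\big),\] where $c_\beta=0$ if $\beta=0$ and $c_\beta=\frac{\alpha-F(\xi)}{\beta}$ if $\beta\neq0$.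
   Context: A distribution function is a non-decreasing, right-continuous $F:\mathbb{R}\to[0,1]$ with limits $0$ at $-\infty$ and $1$ at $+\infty$ ($F$ need not be the distribution function of $X$). $F(x-)=\lim_{z\uparrow x}F(z)$, $\Delta F(x)=F(x)-F(x-)$, $F_\lambda(x)=F(x-)+\lambda\Delta F(x)$ for $\lambda\in[0,1]$, and $F^{\wedge}(\alpha)=\inf\{x:F(x)\ge\alpha\}$. The event $\{F_V(X)\le\alpha\}$ is understood as $\{V\in(0,1],\ F_V(X)\le\alpha\}$ (a set of full probability complement is irrelevant since $\mathbb{P}(V\in(0,1])=1$). *)

From HB Require Import structures.
From mathcomp Require Import all_boot all_order all_algebra.
From mathcomp Require Import all_classical all_reals all_analysis.
Set Implicit Arguments. Unset Strict Implicit. Unset Printing Implicit Defensive.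
Import Order.TTheory GRing.Theory Num.Theory.
Import numFieldNormedType.Exports.
Local Open Scope classical_set_scope.
Local Open Scope ring_scope.

Definition distribution_function (R : realType) (F : R -> R) : Prop :=
  {homo F : x y / x <= y} /\
  (forall x : R, F z @[z --> x^'+] --> F x) /\
  (F z @[z --> -oo] --> (0:R)) /\
  (F z @[z --> +oo] --> (1:R)).

Definition Fleft (R : realType) (F : R -> R) (x : R) : R :=
  lim (F z @[z --> x^'-]).

Definition jump (R : realType) (F : R -> R) (x : R) : R := F x - Fleft F x.

Definition Flam (R : realType) (F : R -> R) (lam x : R) : R :=
  Fleft F x + lam * jump F x.

Definition qinv (R : realType) (F : R -> R) (alpha : R) : R :=
  inf [set x : R | alpha <= F x].

Definition indep_rv d (T : measurableType d) (R : realType) (P : probability T R)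
  (X V : T -> R) : Prop :=
  forall A B : set R, measurable A -> measurable B ->
    P (X @^-1` A `&` V @^-1` B) = (P (X @^-1` A) * P (V @^-1` B))%E.

(** For [0 < v <= 1], [F_v(x) <= alpha] always holds when [x < xi], holds
    exactly when [F(x) = alpha] when [x > xi], and holds at [x = xi] exactly
    when [v <= 1 + c_beta], because [F_v(xi) = F(xi) + (v - 1) beta] and
    [c_beta beta = alpha - F(xi)].  Independence and uniformity of [V] thus
    give [P(F_V(X) <= alpha) = P(X < xi) + (1 + c_beta) P(X = xi)
    + P(X > xi, F(X) = alpha)], and [c_beta beta = alpha - F(xi)] turns this
    into the stated formula. *)

From HB Require Import structures.
From mathcomp Require Import all_boot all_order all_algebra.
From mathcomp Require Import all_classical all_reals all_analysis.
From mathcomp Require Import lra measurable_realfun.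
Set Implicit Arguments.
Unset Strict Implicit.
Unset Printing Implicit Defensive.

Import Order.TTheory GRing.Theory Num.Theory.
Import numFieldNormedType.Exports.
Local Open Scope classical_set_scope.
Local Open Scope ring_scope.

Lemma measurable_preimage d d' (T : measurableType d) (U : measurableType d')
    (f : T -> U) (B : set U) :
  measurable_fun setT f -> measurable B -> measurable (f @^-1` B).
Proof. by move=> mf mB; rewrite -[f @^-1` B]setTI; apply: mf. Qed.

Section DistributionFunction.
Variables (R : realType) (F : R -> R).
Hypothesis hF : distribution_function F.

Let ndF : {homo F : x y / x <= y}. Proof. by case: hF. Qed.

Lemma Fleft_cvg x : cvg (F z @[z --> x^'-]).
Proof.
apply: nondecreasing_at_left_is_cvgr.
  by apply: nearW => y a b _ _; apply: ndF.
apply: nearW => y; exists (F x) => _ [z] /= + <-; rewrite in_itv/=.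
by move=> /andP[_ /ltW zx]; apply: ndF.
Qed.

Lemma le_Fleft z x : z < x -> F z <= Fleft F x.
Proof.
move=> zx; apply: limr_ge; first exact: Fleft_cvg.
by near=> y; apply: ndF; near: y; exact: nbhs_left_ge.
Unshelve. all: by end_near. Qed.

Lemma Fleft_le_ub x a : (forall z, z < x -> F z <= a) -> Fleft F x <= a.
Proof.
move=> Fa; apply: limr_le; first exact: Fleft_cvg.
by near=> y; apply: Fa; near: y; exact: nbhs_left_lt.
Unshelve. all: by end_near. Qed.

Lemma Fleft_le x : Fleft F x <= F x.
Proof. by apply: Fleft_le_ub => z /ltW; apply: ndF. Qed.

Lemma jump_ge0 x : 0 <= jump F x.
Proof. by rewrite subr_ge0 Fleft_le. Qed.

Lemma Flam_le_F v x : v <= 1 -> Flam F v x <= F x.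
Proof.
move=> v1; rewrite /Flam -lerBrDl.
by rewrite -[leRHS]mul1r ler_wpM2r ?jump_ge0.
Qed.

Lemma Flam_le_Fleft_eq v x : 0 < v -> Flam F v x <= Fleft F x -> F x = Fleft F x.
Proof.
move=> v0; rewrite /Flam gerDl pmulr_rle0 // => j0.
by apply/eqP; rewrite -subr_eq0 eq_le j0 jump_ge0.
Qed.

End DistributionFunction.

Section Quantile.
Variables (R : realType) (F : R -> R) (alpha : R).
Hypotheses (hF : distribution_function F) (ha : 0 < alpha < 1).

Let S := [set x : R | alpha <= F x].
Let xi := qinv F alpha.
Let beta := jump F xi.

Let S_has_lbound : has_lbound S.
Proof.
case: hF => _ [_ [F0 _]]; have [a0 _] := andP ha.
have [M [_ FM]] := cvgr_lt _ F0 _ a0.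
exists M => x Sx; rewrite leNgt; apply/negP => /FM.
by rewrite ltNge Sx.
Qed.

Let S_neq0 : S !=set0.
Proof.
case: hF => _ [_ [_ F1]]; have [_ a1] := andP ha.
have [M [_ FM]] := cvgr_gt _ F1 _ a1.
by exists (M + 1); apply/ltW/FM; rewrite ltrDl.
Qed.

Lemma lt_qinv x : x < xi -> F x < alpha.
Proof.
move=> xxi; rewrite ltNge; apply/negP => Sx.
by have := lt_le_trans xxi (ge_inf S_has_lbound Sx); rewrite ltxx.
Qed.

Lemma qinv_lt x : xi < x -> alpha <= F x.
Proof.
case: hF => ndF _ xix; have [y Sy yx] := inf_lt S_neq0 xix.
by apply: le_trans Sy (ndF _ _ (ltW yx)).
Qed.

Lemma le_F_qinv : alpha <= F xi.
Proof.
case: hF => _ [rc _]; apply: (cvgr_to_ge (rc xi)).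
by near=> y; apply: qinv_lt; near: y; exact: nbhs_right_gt.
Unshelve. all: by end_near. Qed.

Lemma Fleft_qinv_le : Fleft F xi <= alpha.
Proof. by apply: Fleft_le_ub => // z /lt_qinv/ltW. Qed.

Definition c_beta : R := if beta == 0 then 0 else (alpha - F xi) / beta.

Lemma c_beta_jump : c_beta * beta = alpha - F xi.
Proof.
rewrite /c_beta; case: eqP => [b0|/eqP b0]; last by rewrite divfK.
have := Fleft_qinv_le; have := le_F_qinv.
by move: b0; rewrite /beta /jump mul0r; lra.
Qed.

Lemma c_beta_bounds : 0 <= 1 + c_beta <= 1.
Proof.
rewrite /c_beta; case: eqP => [_|/eqP b0]; first by rewrite addr0 ler01 lexx.
have bpos : 0 < beta by rewrite lt_neqAle eq_sym b0 jump_ge0.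
have -> : 1 + (alpha - F xi) / beta = (alpha - Fleft F xi) / beta.
  by rewrite -{1}(divff b0) -mulrDl /beta /jump; congr (_ / _); lra.
rewrite divr_ge0 ?subr_ge0 ?Fleft_qinv_le ?jump_ge0 ?Fleft_le //= ler_pdivrMr // mul1r.
by have := le_F_qinv; rewrite /beta /jump; lra.
Qed.

Lemma Flam_qinv_le v : 0 < v <= 1 -> Flam F v xi <= alpha <-> v <= 1 + c_beta.
Proof.
case/andP=> v0 v1.
have -> : Flam F v xi = F xi + (v - 1) * beta.
  by rewrite /Flam mulrBl mul1r /beta /jump; lra.
rewrite -lerBrDl -c_beta_jump.
have [b0|b0] := eqVneq beta 0.
  by rewrite /c_beta b0 eqxx !mulr0 addr0.
have bpos : 0 < beta by rewrite lt_neqAle eq_sym b0 jump_ge0.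
by rewrite ler_pM2r // lerBlDl.
Qed.

Lemma qinv_lt_Flam_le v x : 0 < v <= 1 -> xi < x ->
  Flam F v x <= alpha <-> F x = alpha.
Proof.
case/andP=> v0 v1 xix.
have aFl : alpha <= Fleft F x := le_trans le_F_qinv (le_Fleft hF xix).
split=> [Fa|<-]; last exact: Flam_le_F.
have FFl := Flam_le_Fleft_eq hF v0 (le_trans Fa aFl).
have : Flam F v x = F x by rewrite /Flam /jump -FFl subrr mulr0 addr0.
by move: aFl; rewrite -FFl; lra.
Qed.

Lemma Flam_le_alphaP v x : 0 < v <= 1 ->
  Flam F v x <= alpha <->
  x < xi \/ (x = xi /\ v <= 1 + c_beta) \/ (xi < x /\ F x = alpha).
Proof.
move=> v01; have [_ v1] := andP v01; have [xxi|xix|->] := ltgtP x xi.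
- split=> _; first by left.
  exact: le_trans (Flam_le_F hF x v1) (ltW (lt_qinv xxi)).
- rewrite qinv_lt_Flam_le //; split=> [|[//|[[xxi _]|[]//]]].
  + by right; right.
  + by move: xix; rewrite xxi ltxx.
- rewrite Flam_qinv_le //; split=> [|[|[[]|[]]]]; rewrite ?ltxx //.
  by right; left.
Qed.

Lemma Flam_le_alpha_preimage (T : Type) (X V : T -> R) :
  [set w | 0 < V w <= 1 /\ Flam F (V w) (X w) <= alpha] =
  (X @^-1` `]-oo, xi[ `&` V @^-1` `]0, 1]) `|`
  (X @^-1` [set xi] `&` V @^-1` `]0, 1 + c_beta]) `|`
  (X @^-1` [set x | xi < x /\ F x = alpha] `&` V @^-1` `]0, 1]).
Proof.
have [_ c1] := andP c_beta_bounds.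
apply/seteqP; split=> w /=; rewrite !in_itv /=.
  case=> v01 /(Flam_le_alphaP _ v01) [Xxi|[[Xxi vc]|XA]].
  - by left; left.
  - by left; right; rewrite Xxi vc (andP v01).1.
  - by right.
case=> [[[Xxi v01]|[Xxi /andP[v0 vc]]]|[XA v01]].
- by split=> //; apply/Flam_le_alphaP => //; left.
- have v01 : 0 < V w <= 1 by rewrite v0 (le_trans vc c1).
  by split=> //; apply/Flam_le_alphaP => //; right; left.
- by split=> //; apply/Flam_le_alphaP => //; right; right.
Qed.

Lemma measurable_qinv_level : measurable [set x | xi < x /\ F x = alpha].
Proof.
have mF : measurable_fun setT F by apply: nondecreasing_measurable; case: hF.
rewrite (_ : [set x | _] = `]xi, +oo[ `&` F @^-1` [set alpha]).
  by apply: measurableI => //; rewrite -[F @^-1` _]setTI; apply: mF.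
by apply/seteqP; split=> x /=; rewrite in_itv/= andbT.
Qed.

Lemma qinv_partition_disjoint :
  [/\ `]-oo, xi[ `&` [set xi] = set0,
      `]-oo, xi[ `&` [set x | xi < x /\ F x = alpha] = set0
    & [set xi] `&` [set x | xi < x /\ F x = alpha] = set0].
Proof.
split; apply/seteqP; split=> // x /=; rewrite ?in_itv/=.
- by move=> [+ xxi]; rewrite xxi ltxx.
- by move=> [xxi [/(lt_trans xxi)]]; rewrite ltxx.
- by move=> [-> []]; rewrite ltxx.
Qed.

End Quantile.

Lemma uniform_prob01_itv_oc (R : realType) (t : R) : 0 <= t <= 1 ->
  uniform_prob (@ltr01 R) `]0, t] = t%:E.
Proof.
case/andP=> t0 t1.
have sub01 : `]0, t] `<=` `[0, 1].
  by move=> x /=; rewrite !in_itv/= => /andP[/ltW -> /le_trans->].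
rewrite /uniform_prob integral_uniform_pdf setIidl //.
rewrite (eq_integral (cst 1%:E)); last first.
  move=> x /[!inE] /sub01; rewrite /= in_itv/= => x01.
  by rewrite /uniform_pdf x01 subr0 invr1.
rewrite integral_cst //= mul1e lebesgue_measure_itv/= lte_fin sube0.
by case: ltP => // tle0; congr EFin; apply/le_anti; rewrite t0 tle0.
Qed.

Section IndependentUniform.
Variables (R : realType) (d : measure_display) (T : measurableType d).
Variables (P : probability T R) (X V : T -> R).
Hypotheses (mX : measurable_fun setT X) (mV : measurable_fun setT V).
Hypothesis V_uniform : forall B : set R, measurable B ->
  P (V @^-1` B) = uniform_prob (@ltr01 R) B.
Hypothesis XV_indep : indep_rv P X V.

Lemma prob_indep_uniform_oc (A : set R) (t : R) : measurable A -> 0 <= t <= 1 ->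
  P (X @^-1` A `&` V @^-1` `]0, t]) = (P (X @^-1` A) * t%:E)%E.
Proof.
move=> mA t01; rewrite XV_indep //.
by rewrite V_uniform // uniform_prob01_itv_oc.
Qed.

Let disjoint_preimages (B1 B2 : set R) (C1 C2 : set T) : B1 `&` B2 = set0 ->
  (X @^-1` B1 `&` C1) `&` (X @^-1` B2 `&` C2) = set0.
Proof.
move=> B0; apply/seteqP; split=> // w [[B1w _] [B2w _]].
by have : (B1 `&` B2) (X w) by []; rewrite B0.
Qed.

Lemma prob_randomized_union (A1 A2 A3 : set R) (t : R) :
  measurable A1 -> measurable A2 -> measurable A3 ->
  A1 `&` A2 = set0 -> A1 `&` A3 = set0 -> A2 `&` A3 = set0 -> 0 <= t <= 1 ->
  P ((X @^-1` A1 `&` V @^-1` `]0, 1]) `|` (X @^-1` A2 `&` V @^-1` `]0, t]) `|`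
     (X @^-1` A3 `&` V @^-1` `]0, 1])) =
  (P (X @^-1` A1) + P (X @^-1` A2) * t%:E + P (X @^-1` A3))%E.
Proof.
move=> mA1 mA2 mA3 A12 A13 A23 t01.
have mI A s : measurable A -> measurable (X @^-1` A `&` V @^-1` `]0, s]).
  by move=> mA; apply: measurableI; apply: measurable_preimage.
have := mI _ 1 mA1; have := mI _ t mA2; have := mI _ 1 mA3 => mI3 mI2 mI1.
rewrite measureU ?measureU ?setIUl ?disjoint_preimages ?setU0 //;
  try exact: measurableU.
(* [measureU] states additivity through the content coercion of [P]. *)
rewrite -[Content.sort _]/(Probability.sort P).
by rewrite !prob_indep_uniform_oc ?ler01 ?lexx // !mule1.
Qed.

End IndependentUniform.

Lemma fin_num_randomized_identity (R : realType) (p1 p2 p3 : \bar R) (a b c f : R) :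
  p1 \is a fin_num -> p2 \is a fin_num -> p3 \is a fin_num -> c * b = a - f ->
  (p1 + p2 * (1 + c)%:E + p3 - a%:E = p3 + c%:E * (p2 - b%:E) + (p1 + p2 - f%:E))%E.
Proof.
move: p1 p2 p3 => [p1||] [p2||] [p3||] // _ _ _ cb /=.
by congr EFin; lra.
Qed.

Theorem mainTheorem7 (R : realType) (F : R -> R) (alpha : R)
  (d : measure_display) (T : measurableType d) (P : probability T R)
  (X V : T -> R) :
  distribution_function F ->
  0 < alpha < 1 ->
  measurable_fun setT X -> measurable_fun setT V ->
  (forall B : set R, measurable B ->
     P (V @^-1` B) = uniform_prob (@ltr01 R) B) ->
  indep_rv P X V ->
  let xi := qinv F alpha in
  let beta := jump F xi in
  let c := if beta == 0 then 0 else (alpha - F xi) / beta in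
  (P [set w | (0 < V w <= 1)%R /\ (Flam F (V w) (X w) <= alpha)%R] - alpha%:E =
   P [set w | (xi < X w)%R /\ F (X w) = alpha]
   + c%:E * (P [set w | X w = xi] - beta%:E)
   + (P [set w | (X w <= xi)%R] - (F xi)%:E))%E.
Proof.
move=> hF ha mX mV V_uniform XV_indep xi beta c.
have mpreX B : measurable B -> measurable (X @^-1` B) := measurable_preimage mX.
have [D12 D13 D23] := qinv_partition_disjoint F alpha.
have mA3 := measurable_qinv_level alpha hF.
have X_le_xi : [set w | X w <= xi] = X @^-1` `]-oo, xi[ `|` X @^-1` [set xi].
  apply/seteqP; split=> w /=; rewrite in_itv/=.
    by rewrite le_eqVlt => /orP[/eqP ->|->]; [right|left].
  by case=> [/ltW|->].
rewrite (Flam_le_alpha_preimage hF ha) prob_randomized_union ?c_beta_bounds //.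
rewrite X_le_xi measureU ?mpreX //; last by rewrite -preimage_setI D12.
apply: fin_num_randomized_identity; last exact: c_beta_jump.
all: by [apply: fin_num_measure; apply: mpreX | apply: mpreX].
Qed.
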